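(* For every set of formulas $\Theta\subseteq\mathrm{Form}$, $\Theta^\vdash=\Theta^\models$.
   Context: Formulas: $\mathrm{Form}$ is the least set containing a fixed countably infinite set of propositional variables and closed under $\alpha\to\beta$, $\neg\alpha$, and $\delta(\langle\alpha_i\rangle)$ for every sequence $\langle\alpha_i\rangle=\alpha_1,\alpha_2,\dots$ indexed by $\omega$. Notation: $\langle\alpha\rangle$ is the constant sequence of value $\alpha$; $\alpha,\langle\beta_i\rangle$ is $\alpha,\beta_1,\beta_2,\dots$; $\langle\alpha_i\rangle_{i>1}$ is $\alpha_2,\alpha_3,\dots$; $\tfrac12\alpha:=\delta(\alpha,\langle\neg(\alpha\to\alpha)\rangle)$; a schema $\alpha\leftrightarrow\beta$ stands for the two schemas $\alpha\to\beta$ and $\beta\to\alpha$. The calculus $\mathcal{L}_\Delta$ has axiom schemata: (Ł1) $\alpha\to(\beta\to\alpha)$; (Ł2) $(\alpha\to\beta)\to((\beta\to\gamma)\to(\alpha\to\gamma))$; (Ł3) $((\alpha\to\beta)\to\beta)\to((\beta\to\alpha)\to\alpha)$; (Ł4) $(\neg\alpha\to\neg\beta)\to(\beta\to\alpha)$; (Δ1) $\neg(\delta(\langle\alpha_i\rangle)\to\tfrac12\alpha_1)\leftrightarrow\tfrac12\delta(\langle\alpha_i\rangle_{i>1})$; (Δ2) $\tfrac12\delta(\langle\alpha_i\rangle)\leftrightarrow\delta(\langle\tfrac12\alpha_i\rangle)$; (Δ3) $\delta(\langle\alpha\rangle)\leftrightarrow\alpha$; (Δ4) $\tfrac12\delta(\langle\alpha_i\rangle)\leftrightarrow\delta(\neg(\alpha\to\alpha),\langle\alpha_i\rangle)$;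 (Δ5) $\delta(\langle\alpha_i\rangle)\to\delta(\langle\neg\alpha_i\to\beta_i\rangle)$; (Δ6) $\tfrac12\neg(\alpha\to\beta)\leftrightarrow\neg(\tfrac12\alpha\to\tfrac12\beta)$; (Δ7) $\delta(\langle\alpha_i\to\beta_i\rangle)\to(\delta(\langle\alpha_i\rangle)\to\delta(\langle\beta_i\rangle))$. Rules: Modus Ponens and the $\delta$-rule (from $\alpha_i$ for all $i\in\omega$ infer $\delta(\langle\alpha_i\rangle)$). A proof of $\alpha$ from $\Theta$ is a sequence $(\alpha_i)_{i\in\eta+1}$ indexed by a successor ordinal with $\eta$ countable, $\alpha_\eta=\alpha$, each member an axiom, an element of $\Theta$, or obtained from earlier members by a rule. $\Theta^\vdash$ is the set of formulas provable from $\Theta$. Semantics: a valuation is a map $f\colon\mathrm{Form}\to[0,1]$ with $f(\neg\alpha)=1-f(\alpha)$, $f(\alpha\to\beta)=\min\{1,1-f(\alpha)+f(\beta)\}$, $f(\delta(\langle\alpha_i\rangle))=\sum_{i\ge1}f(\alpha_i)/2^i$. $f$ satisfies $\alpha$ if $f(\alpha)=1$. $\Theta^\models$ is the set of formulas satisfied by every valuation that satisfies every formula in $\Theta$. *)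

From Stdlib Require Import Reals.
Open Scope R_scope.

(** Formulas. Propositional variables are indexed by nat. A sequence
    <alpha_i> = alpha_1, alpha_2, ... is represented by s : nat -> Form
    with s 0 = alpha_1, s 1 = alpha_2, ... *)
Inductive Form : Type :=
| Var : nat -> Form
| Imp : Form -> Form -> Form
| Neg : Form -> Form
| Delta : (nat -> Form) -> Form.

Definition scons (a : Form) (s : nat -> Form) : nat -> Form :=
  fun n => match n with O => a | S m => s m end.

Definition stail (s : nat -> Form) : nat -> Form := fun n => s (S n).

Definition sconst (a : Form) : nat -> Form := fun _ => a.

Definition half (a : Form) : Form := Delta (scons a (sconst (Neg (Imp a a)))).

(** IsAxiom schemata of L_Delta (each biconditional schema gives two). *)
Inductive IsAxiom : Form -> Prop :=
| L1 : forall a b, IsAxiom (Imp a (Imp b a))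
| L2 : forall a b c, IsAxiom (Imp (Imp a b) (Imp (Imp b c) (Imp a c)))
| L3 : forall a b, IsAxiom (Imp (Imp (Imp a b) b) (Imp (Imp b a) a))
| L4 : forall a b, IsAxiom (Imp (Imp (Neg a) (Neg b)) (Imp b a))
| D1a : forall s, IsAxiom (Imp (Neg (Imp (Delta s) (half (s O)))) (half (Delta (stail s))))
| D1b : forall s, IsAxiom (Imp (half (Delta (stail s))) (Neg (Imp (Delta s) (half (s O)))))
| D2a : forall s, IsAxiom (Imp (half (Delta s)) (Delta (fun n => half (s n))))
| D2b : forall s, IsAxiom (Imp (Delta (fun n => half (s n))) (half (Delta s)))
| D3a : forall a, IsAxiom (Imp (Delta (sconst a)) a)
| D3b : forall a, IsAxiom (Imp a (Delta (sconst a)))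
| D4a : forall a s, IsAxiom (Imp (half (Delta s)) (Delta (scons (Neg (Imp a a)) s)))
| D4b : forall a s, IsAxiom (Imp (Delta (scons (Neg (Imp a a)) s)) (half (Delta s)))
| D5 : forall s t, IsAxiom (Imp (Delta s) (Delta (fun n => Imp (Neg (s n)) (t n))))
| D6a : forall a b, IsAxiom (Imp (half (Neg (Imp a b))) (Neg (Imp (half a) (half b))))
| D6b : forall a b, IsAxiom (Imp (Neg (Imp (half a) (half b))) (half (Neg (Imp a b))))
| D7 : forall s t, IsAxiom (Imp (Delta (fun n => Imp (s n) (t n)))
                            (Imp (Delta s) (Delta t))).

(** A proof of [phi] from [Theta]: a sequence indexed by a countable
    successor ordinal eta+1, represented as a countable type [I] carrying a
    strict well-order [lt] (well-founded, transitive, total) with a greatest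
    element [top] (the last index eta), a labelling [a : I -> Form] with
    [a top = phi], and each member an axiom, a member of Theta, or obtained
    from earlier members by Modus Ponens or by the delta-rule. *)
Definition is_proof (Theta : Form -> Prop) (phi : Form)
  (I : Type) (lt : I -> I -> Prop) (top : I) (a : I -> Form) : Prop :=
  well_founded lt /\
  (forall i j k, lt i j -> lt j k -> lt i k) /\
  (forall i j, lt i j \/ i = j \/ lt j i) /\
  (exists enc : I -> nat, forall i j, enc i = enc j -> i = j) /\
  (forall i, i = top \/ lt i top) /\
  a top = phi /\
  (forall i,
     IsAxiom (a i) \/
     Theta (a i) \/
     (exists j k, lt j i /\ lt k i /\ a k = Imp (a j) (a i)) \/
     (exists g : nat -> I, (forall n, lt (g n) i) /\
                           a i = Delta (fun n => a (g n)))).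

Definition Provable (Theta : Form -> Prop) (phi : Form) : Prop :=
  exists (I : Type) (lt : I -> I -> Prop) (top : I) (a : I -> Form),
    is_proof Theta phi I lt top a.

(** Valuations: f(delta(<alpha_i>)) = sum_{i>=1} f(alpha_i)/2^i,
    i.e. sum_{n>=0} f(s n)/2^(n+1). *)
Definition valuation (f : Form -> R) : Prop :=
  (forall a, 0 <= f a <= 1) /\
  (forall a, f (Neg a) = 1 - f a) /\
  (forall a b, f (Imp a b) = Rmin 1 (1 - f a + f b)) /\
  (forall s, infinite_sum (fun n => f (s n) / 2 ^ (S n)) (f (Delta s))).

Definition Entails (Theta : Form -> Prop) (phi : Form) : Prop :=
  forall f, valuation f -> (forall t, Theta t -> f t = 1) -> f phi = 1.

From Stdlib Require Import Setoid Lia Reals Lra ZArith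
  Classical Eqdep_dec IndefiniteDescription Cantor FunctionalExtensionality.
From mathcomp Require classical_sets.
Unset Asymmetric Patterns.
Open Scope nat_scope.

(** Soundness is a transfinite induction along a proof: every axiom is valued 1
    by every valuation, Modus Ponens and the delta-rule preserve value 1.

    Completeness follows the algebraic route.  Let [T] be the set of formulas
    derivable from [Theta] by a well-founded derivation tree ([Der]); such
    trees are flattened into proofs in the sense of [is_proof].  [T] is a
    filter closed under the delta-rule.  If [phi] is not in [T], the
    Archimedean lemma (which uses the delta-rule) gives a level [n] with
    [~phi -> 2^-n] not in [T]; Zorn's lemma extends [T] to a *linear* filter [F]
    still omitting that formula.  Modulo [F] the formulas form a linearly
    ordered MV-algebra with a halving operator and dyadic constants
    [k/2^n]; sending a formula to the supremum of the dyadic constants below it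
    is a valuation which values [Theta] by 1 but [phi] by at most [1 - 2^-n]. *)

Inductive Der (Th : Form -> Prop) : Form -> Prop :=
| der_ax x : IsAxiom x -> Der Th x
| der_hyp x : Th x -> Der Th x
| der_mp x y : Der Th x -> Der Th (Imp x y) -> Der Th y
| der_delta s : (forall n, Der Th (s n)) -> Der Th (Delta s).

Definition Thm : Form -> Prop := Der (fun _ => False).

Lemma Thm_Der Th x : Thm x -> Der Th x.
Proof.
  induction 1 as [x Hx|x []|x y _ IH1 _ IH2|s _ IH].
  - now apply der_ax.
  - exact (der_mp Th x y IH1 IH2).
  - now apply der_delta.
Qed.

Definition Top : Form := Imp (Var 0) (Var 0).
Definition Bot : Form := Neg Top.

Class IsFilter (F : Form -> Prop) : Prop := {
  filter_thm : forall x, Thm x -> F x;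
  filter_mp : forall x y, F x -> F (Imp x y) -> F y }.

Class IsDeltaFilter (T : Form -> Prop) : Prop := {
  dfilter :: IsFilter T;
  dfilter_rule : forall s, (forall n, T (s n)) -> T (Delta s) }.

#[global] Instance Der_DeltaFilter Th : IsDeltaFilter (Der Th).
Proof.
  split; [split|].
  - apply Thm_Der.
  - exact (der_mp Th).
  - exact (der_delta Th).
Qed.

Section Hilbert.
Context {F : Form -> Prop} {HF : IsFilter F}.

Lemma filter_ax x : IsAxiom x -> F x.
Proof. intros H; apply filter_thm, der_ax, H. Qed.

Lemma ax_K p q : F (Imp p (Imp q p)). Proof. apply filter_ax; constructor. Qed.
Lemma ax_trans p q r : F (Imp (Imp p q) (Imp (Imp q r) (Imp p r))).
Proof. apply filter_ax; constructor. Qed.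
Lemma ax_L3 p q : F (Imp (Imp (Imp p q) q) (Imp (Imp q p) p)).
Proof. apply filter_ax; constructor. Qed.
Lemma ax_contra p q : F (Imp (Imp (Neg p) (Neg q)) (Imp q p)).
Proof. apply filter_ax; constructor. Qed.

Local Notation mp := (@filter_mp F HF _ _).

Lemma imp_weaken_ant x y z : F (Imp (Imp (Imp x y) z) (Imp y z)).
Proof. exact (mp (ax_K y x) (ax_trans y (Imp x y) z)). Qed.

Lemma discharge_K x y z : F (Imp (Imp (Imp x (Imp y x)) z) z).
Proof.
  set (K := Imp x (Imp y x)).
  exact (mp (mp (ax_K x y) (ax_K K (Imp z K))) (ax_L3 z K)).
Qed.

Lemma imp_refl x : F (Imp x x).
Proof. exact (mp (discharge_K Top Top x) (imp_weaken_ant (Imp Top (Imp Top Top)) x x)). Qed.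

Lemma imp_pt x y : F (Imp x (Imp (Imp x y) y)).
Proof. exact (mp (ax_L3 y x) (imp_weaken_ant (Imp y x) x (Imp (Imp x y) y))). Qed.

Lemma imp_exch x y z : F (Imp (Imp x (Imp y z)) (Imp y (Imp x z))).
Proof.
  pose proof (mp (imp_pt y z) (ax_trans y (Imp (Imp y z) z) (Imp x z))) as Hyz.
  pose proof (mp (ax_trans x (Imp y z) z)
                 (ax_trans (Imp x (Imp y z)) (Imp (Imp (Imp y z) z) (Imp x z))
                           (Imp y (Imp x z)))) as Hx.
  exact (mp Hyz Hx).
Qed.

Lemma neg_efq x y : F (Imp (Neg x) (Imp x y)).
Proof. exact (mp (ax_contra y x) (imp_weaken_ant (Neg y) (Neg x) (Imp x y))). Qed.

Lemma dneg_weak x y : F (Imp (Neg (Neg x)) (Imp y x)).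
Proof.
  pose proof (mp (neg_efq (Neg x) (Neg y))
                 (ax_trans (Neg (Neg x)) (Imp (Neg x) (Neg y)) (Imp y x))) as H.
  exact (mp (ax_contra x y) H).
Qed.

Lemma filter_Top : F Top. Proof. apply imp_refl. Qed.

Lemma dneg_elim x : F (Imp (Neg (Neg x)) x).
Proof. exact (mp filter_Top (mp (dneg_weak x Top) (imp_exch (Neg (Neg x)) Top x))). Qed.

Lemma dneg_intro x : F (Imp x (Neg (Neg x))).
Proof. exact (mp (dneg_elim (Neg x)) (ax_contra (Neg (Neg x)) x)). Qed.

Lemma falsum_efq a y : F (Imp (Neg (Imp a a)) y).
Proof. exact (mp (imp_refl a) (mp (neg_efq (Imp a a) y) (imp_exch _ _ _))). Qed.
End Hilbert.

Definition le (F : Form -> Prop) x y := F (Imp x y).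
Definition eqv (F : Form -> Prop) x y := le F x y /\ le F y x.

Section Order.
Context {F : Form -> Prop} {HF : IsFilter F}.
Local Notation mp := (@filter_mp F HF _ _).
Local Notation "x <= y" := (le F x y).
Local Notation "x == y" := (eqv F x y) (at level 70).

Lemma le_refl x : x <= x. Proof. apply imp_refl. Qed.
Lemma le_trans x y z : x <= y -> y <= z -> x <= z.
Proof. intros H1 H2. exact (mp H2 (mp H1 (ax_trans x y z))). Qed.
Lemma le_filter x y : x <= y -> F x -> F y. Proof. intros H1 H2; exact (mp H2 H1). Qed.
Lemma filter_le x : F x -> forall y, y <= x. Proof. intros H y. exact (mp H (ax_K x y)). Qed.

Lemma imp_mono_r x y z : y <= z -> Imp x y <= Imp x z.
Proof. intros H. exact (mp H (mp (ax_trans x y z) (imp_exch _ _ _))). Qed.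
Lemma imp_anti_l x y z : x <= y -> Imp y z <= Imp x z.
Proof. intros H. exact (mp H (ax_trans x y z)). Qed.
Lemma le_imp x y z w : y <= x -> z <= w -> Imp x z <= Imp y w.
Proof. intros. eapply le_trans. apply imp_anti_l; eauto. apply imp_mono_r; auto. Qed.

Lemma imp_from_filter x y : F x -> Imp x y == y.
Proof. intros H; split. exact (mp H (imp_pt x y)). apply ax_K. Qed.

Lemma neg_anti x y : x <= y -> Neg y <= Neg x.
Proof.
  intros H. refine (mp _ (ax_contra (Neg x) (Neg y))).
  exact (le_trans (Neg (Neg x)) x _ (dneg_elim x) (le_trans x y (Neg (Neg y)) H (dneg_intro y))).
Qed.

Lemma dneg x : Neg (Neg x) == x. Proof. split; [apply dneg_elim|apply dneg_intro]. Qed.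
Lemma le_Top x : x <= Top. Proof. apply filter_le, filter_Top. Qed.
Lemma Bot_le y : Bot <= y. Proof. apply falsum_efq. Qed.
End Order.

#[global] Instance eqv_Equiv F (HF : IsFilter F) : Equivalence (eqv F).
Proof.
  split; [intro; split; apply le_refl|intros ? ? []; split; auto|].
  intros ? ? ? [] []; split; eapply le_trans; eauto.
Qed.
#[global] Instance le_Pre F (HF : IsFilter F) : PreOrder (le F).
Proof. split; [intro; apply le_refl|intros ? ? ?; apply le_trans]. Qed.

Add Parametric Morphism F (HF : IsFilter F) : Imp
  with signature (eqv F) ==> (eqv F) ==> (eqv F) as imp_mor.
Proof. intros x y [] z w []; split; apply le_imp; auto. Qed.
Add Parametric Morphism F (HF : IsFilter F) : Neg
  with signature (eqv F) ==> (eqv F) as neg_mor.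
Proof. intros x y []; split; apply neg_anti; auto. Qed.
Add Parametric Morphism F (HF : IsFilter F) : Neg
  with signature (le F) --> (le F) as neg_mor_le.
Proof. intros x y ?; apply neg_anti; auto. Qed.
Add Parametric Morphism F (HF : IsFilter F) : (le F)
  with signature (eqv F) ==> (eqv F) ==> iff as le_mor.
Proof. intros x y [] z w []; split; intros; repeat (eapply le_trans; eauto). Qed.
Add Parametric Morphism F (HF : IsFilter F) : F
  with signature (eqv F) ==> iff as filter_mor.
Proof. intros x y []; split; apply le_filter; auto. Qed.

Definition oplus a b := Imp (Neg a) b.
Definition otimes a b := Neg (Imp a (Neg b)).
Definition vee a b := Imp (Imp a b) b.

Add Parametric Morphism F (HF : IsFilter F) : oplus
  with signature (eqv F) ==> (eqv F) ==> (eqv F) as oplus_mor.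
Proof. intros ? ? H ? ? H0. unfold oplus. rewrite H, H0. reflexivity. Qed.

Section MV.
Context {F : Form -> Prop} {HF : IsFilter F}.
Local Notation "x <= y" := (le F x y).
Local Notation "x == y" := (eqv F x y) (at level 70).

Lemma filter_eqv_Top x : F x -> x == Top.
Proof. intros; split. apply le_Top. apply filter_le; auto. Qed.
Lemma eqv_Top_filter x : x == Top -> F x. Proof. intros ->. apply filter_Top. Qed.
Lemma Bot_eqv x : x <= Bot -> x == Bot. Proof. intros; split; auto. apply Bot_le. Qed.
Lemma neg_imp_self a : Neg (Imp a a) == Bot.
Proof. unfold Bot. rewrite (filter_eqv_Top (Imp a a)) by apply imp_refl. reflexivity. Qed.

Lemma vee_comm a b : vee a b == vee b a. Proof. split; apply ax_L3. Qed.
Lemma exch_eqv x y z : Imp x (Imp y z) == Imp y (Imp x z). Proof. split; apply imp_exch. Qed.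
Lemma contrapos x y : Imp x y == Imp (Neg y) (Neg x).
Proof.
  split; [|apply ax_contra].
  rewrite <- (dneg x) at 1. rewrite <- (dneg y) at 1. apply ax_contra.
Qed.
Lemma imp_neg_swap a b : Imp a (Neg b) == Imp b (Neg a).
Proof. rewrite contrapos, dneg. reflexivity. Qed.
Lemma neg_le_swap a b : a <= Neg b -> b <= Neg a.
Proof. intros H. apply neg_anti in H. rewrite dneg in H. auto. Qed.

Lemma imp_otimes p q r : Imp (otimes p q) r == Imp p (Imp q r).
Proof.
  unfold otimes. rewrite (contrapos q r), (exch_eqv p (Neg r) (Neg q)).
  rewrite (contrapos (Neg r) (Imp p (Neg q))), dneg. reflexivity.
Qed.

Lemma meet_le a y : y <= a -> otimes a (Imp a y) == y.
Proof.
  intros H. unfold otimes. rewrite imp_neg_swap, (contrapos a y).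
  change (Neg (vee (Neg y) (Neg a)) == y). rewrite vee_comm. unfold vee.
  rewrite (imp_from_filter (Imp (Neg a) (Neg y))). apply dneg.
  apply neg_anti; auto.
Qed.

Lemma imp_imp_swap x y : Imp (Imp x y) (Imp y x) == Imp y x.
Proof.
  set (A := Imp x y).
  assert (E1 : Imp y x == Imp (Imp A y) x).
  { assert (Hb : Imp (Imp (Imp y x) x) x == Imp y x).
    { split. apply le_imp; [apply imp_pt|reflexivity]. apply imp_pt. }
    unfold A. change (Imp (Imp x y) y) with (vee x y). rewrite vee_comm.
    unfold vee. rewrite Hb. reflexivity. }
  rewrite E1 at 1. rewrite (exch_eqv A (Imp A y) x), (exch_eqv (Imp A y) A x).
  rewrite <- imp_otimes, meet_le. reflexivity. apply ax_K.
Qed.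

Lemma prelinearity x y : F (vee (Imp x y) (Imp y x)).
Proof. unfold vee. rewrite imp_imp_swap. apply imp_refl. Qed.

Lemma vee_lub a b r : a <= r -> b <= r -> vee a b <= r.
Proof.
  intros Ha Hb. rewrite vee_comm. unfold vee.
  transitivity (Imp (Imp r a) a). apply le_imp; [apply le_imp; [exact Hb|reflexivity]|reflexivity].
  change (vee r a <= r). rewrite vee_comm. unfold vee.
  rewrite imp_from_filter; [reflexivity|exact Ha].
Qed.

Lemma prelinear_cases x y r : F (Imp (Imp x y) r) -> F (Imp (Imp y x) r) -> F r.
Proof. intros H1 H2. exact (le_filter _ _ (vee_lub _ _ _ H1 H2) (prelinearity x y)). Qed.

Lemma oplus_comm a b : oplus a b == oplus b a.
Proof. unfold oplus. rewrite contrapos, dneg. reflexivity. Qed.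
Lemma oplus_assoc a b c : oplus (oplus a b) c == oplus a (oplus b c).
Proof.
  unfold oplus. transitivity (Imp (otimes (Neg a) (Neg b)) c).
  unfold otimes. rewrite (dneg b). reflexivity. apply imp_otimes.
Qed.
Lemma oplus_Bot x : oplus Bot x == x.
Proof. unfold oplus, Bot. rewrite dneg. apply imp_from_filter, filter_Top. Qed.
Lemma oplus_Bot_r x : oplus x Bot == x. Proof. rewrite oplus_comm; apply oplus_Bot. Qed.
Lemma oplus_le a a' b b' : a <= a' -> b <= b' -> oplus a b <= oplus a' b'.
Proof. intros. unfold oplus. apply le_imp; auto. apply neg_anti; auto. Qed.
Lemma oplus_Top_l x : oplus Top x == Top.
Proof. rewrite oplus_comm. apply filter_eqv_Top, filter_le, filter_Top. Qed.
Lemma le_oplus_l a b : a <= oplus a b.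
Proof. unfold oplus. rewrite contrapos, (dneg a). apply ax_K. Qed.

(** If [x <= ~y] then [(x (+) y) -> y] is [~x]: no truncation happens. *)
Lemma oplus_imp_cancel x y : x <= Neg y -> Imp (oplus x y) y == Neg x.
Proof.
  intros H. change (vee (Neg x) y == Neg x). rewrite vee_comm. unfold vee.
  apply imp_from_filter. apply neg_le_swap; auto.
Qed.

Lemma oplus_cancel c p q : oplus c p == oplus c q -> p <= Neg c -> q <= Neg c -> p == q.
Proof.
  intros E Hp Hq. rewrite <- (dneg p), <- (dneg q).
  rewrite <- (oplus_imp_cancel p c Hp), <- (oplus_imp_cancel q c Hq).
  rewrite (oplus_comm p c), (oplus_comm q c), E. reflexivity.
Qed.

Lemma oplus_absorb_Bot x y : oplus x y == y -> x <= Neg y -> x == Bot.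
Proof.
  intros E H. rewrite <- (dneg x), <- (oplus_imp_cancel x y H), E.
  apply neg_imp_self.
Qed.
End MV.

(** Monotonicity of [Delta] needs the delta-rule. *)
Section DeltaFilter.
Context {T : Form -> Prop} {HT : IsDeltaFilter T}.

Lemma delta_mono s t : (forall n, le T (s n) (t n)) -> le T (Delta s) (Delta t).
Proof.
  intros H. exact (filter_mp _ _ (dfilter_rule _ H) (filter_ax _ (D7 s t))).
Qed.
Lemma delta_cong s t : (forall n, eqv T (s n) (t n)) -> eqv T (Delta s) (Delta t).
Proof. intros H; split; apply delta_mono; intro n; apply H. Qed.
End DeltaFilter.

Section Theorems.
Context {F : Form -> Prop} {HF : IsFilter F}.
Local Notation "x <= y" := (le F x y).
Local Notation "x == y" := (eqv F x y) (at level 70).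

Lemma thm_le x y : le Thm x y -> x <= y. Proof. exact (filter_thm _). Qed.
Lemma ax_eqv x y : IsAxiom (Imp x y) -> IsAxiom (Imp y x) -> x == y.
Proof. intros H1 H2; split; [exact (filter_ax _ H1)|exact (filter_ax _ H2)]. Qed.

Lemma delta_const a : Delta (sconst a) == a. Proof. apply ax_eqv; constructor. Qed.
End Theorems.

(** Axiom D6, read as: [half a -> half b] is [~ half ~(a -> b)]. *)
Lemma half_imp_half {F} {HF : IsFilter F} a b :
  eqv F (Imp (half a) (half b)) (Neg (half (Neg (Imp a b)))).
Proof.
  rewrite <- (dneg (Imp (half a) (half b))). apply neg_mor; [exact _|].
  apply ax_eqv; constructor.
Qed.

(** [half x <= x] and [half] is monotone, modulo any filter; both are
    theorems whose proofs use the delta-rule. *)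
Lemma half_le {F} {HF : IsFilter F} x : le F (half x) x.
Proof.
  apply thm_le. transitivity (Delta (sconst x)); [|exact (@filter_ax Thm _ _ (D3a x))].
  apply delta_mono. intros [|n]; [reflexivity|apply falsum_efq].
Qed.

Lemma half_mono {F} {HF : IsFilter F} x y : le F x y -> le F (half x) (half y).
Proof.
  intros H. refine (filter_mp (Imp x y) (Imp (half x) (half y)) H _). apply thm_le.
  rewrite (half_imp_half (F:=Thm)), <- (dneg (F:=Thm) (Imp x y)) at 1.
  apply neg_anti, half_le.
Qed.

Add Parametric Morphism F (HF : IsFilter F) : half
  with signature (eqv F) ==> (eqv F) as half_mor.
Proof. intros x y []; split; apply half_mono; auto. Qed.

Section HalfArith.
Context {F : Form -> Prop} {HF : IsFilter F}.
Local Notation "x <= y" := (le F x y).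
Local Notation "x == y" := (eqv F x y) (at level 70).

Lemma half_Bot : half Bot == Bot. Proof. apply Bot_eqv, half_le. Qed.

Lemma neg_half_Top : Neg (half Top) == half Top.
Proof.
  assert (A : Neg (Imp (Delta (sconst Top)) (half Top)) == half (Delta (sconst Top)))
    by apply (ax_eqv _ _ (D1a (sconst Top)) (D1b (sconst Top))).
  rewrite delta_const, imp_from_filter in A; [exact A|apply filter_Top].
Qed.

Lemma half_head_le_delta s : half (s O) <= Delta s.
Proof. apply thm_le, delta_mono. intros [|n]; [reflexivity|apply falsum_efq]. Qed.

(** Axiom D1 as a decomposition: [Delta s = half s0 (+) half (Delta (tail s))]. *)
Lemma delta_decomp s : Delta s == oplus (half (s O)) (half (Delta (stail s))).
Proof.
  assert (A : Neg (Imp (Delta s) (half (s O))) == half (Delta (stail s)))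
    by apply (ax_eqv _ _ (D1a s) (D1b s)).
  rewrite <- A. unfold oplus. rewrite <- (contrapos (Imp (Delta s) (half (s O))) (half (s O))).
  change (Delta s == vee (Delta s) (half (s O))). rewrite vee_comm. unfold vee.
  rewrite imp_from_filter; [reflexivity|apply half_head_le_delta].
Qed.

Lemma half_double x : oplus (half x) (half x) == x.
Proof.
  pose proof (delta_decomp (sconst x)) as D. change (stail (sconst x)) with (sconst x) in D.
  rewrite delta_const in D. symmetry; exact D.
Qed.

Lemma neg_half x : Neg (half x) == oplus (half Top) (half (Neg x)).
Proof.
  unfold oplus. rewrite neg_half_Top, half_imp_half, (imp_from_filter Top) by apply filter_Top.
  rewrite (dneg x). reflexivity.
Qed.

Lemma half_le_half_Top x : half x <= half Top. Proof. apply half_mono, le_Top. Qed.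

Lemma half_le_neg_half x y : half x <= Neg (half y).
Proof. rewrite half_le_half_Top, <- neg_half_Top. apply neg_anti, half_le_half_Top. Qed.

Lemma half_neg x : half (Neg x) == Neg (oplus (half Top) (half x)).
Proof. rewrite <- (dneg (half (Neg x))), (neg_half (Neg x)), (dneg x). reflexivity. Qed.

Lemma half_oplus a b : a <= Neg b -> oplus (half a) (half b) == half (oplus a b).
Proof.
  intros Hab.
  assert (E : oplus (half Top) (half (oplus a b)) ==
              oplus (half Top) (oplus (half a) (half b))).
  { assert (K : oplus (half Top) (half (Imp (Neg a) b)) == Imp (half (Neg a)) (half b))
      by (rewrite half_imp_half, neg_half, dneg; reflexivity).
    unfold oplus at 2. rewrite K, <- oplus_assoc, <- (dneg (half (Neg a))), neg_half, dneg.
    reflexivity. }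
  symmetry. apply (oplus_cancel _ _ _ E); [apply half_le_neg_half|].
  rewrite neg_half_Top. transitivity (oplus (half (Neg b)) (half b)).
  - apply oplus_le; [apply half_mono; auto|reflexivity].
  - rewrite half_neg. unfold oplus at 1. rewrite dneg, oplus_imp_cancel, neg_half_Top.
    reflexivity. apply half_le_neg_half.
Qed.

Lemma half_of_double x : x <= half Top -> half (oplus x x) == x.
Proof.
  intros H. rewrite <- half_oplus; [apply half_double|].
  rewrite H at 1. rewrite <- neg_half_Top. apply neg_anti; auto.
Qed.
End HalfArith.

(** Dyadic constants: [half_pow n] is 2^-n and [dyadic k n] is k/2^n, the
    [k]-fold MV-sum of [half_pow n]. *)
Definition half_pow (n : nat) : Form := Nat.iter n half Top.
Definition mult (k : nat) (x : Form) : Form := Nat.iter k (oplus x) Bot.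
Definition dyadic (k n : nat) : Form := mult k (half_pow n).

Section Dyadic.
Context {F : Form -> Prop} {HF : IsFilter F}.
Local Notation "x <= y" := (le F x y).
Local Notation "x == y" := (eqv F x y) (at level 70).

Lemma mult_S k x : mult (S k) x = oplus x (mult k x). Proof. reflexivity. Qed.
Lemma mult_mono k x y : x <= y -> mult k x <= mult k y.
Proof.
  intros H; induction k; [reflexivity|].
  rewrite !mult_S. apply oplus_le; auto.
Qed.
Lemma mult_cong k x y : x == y -> mult k x == mult k y.
Proof. intros []; split; apply mult_mono; auto. Qed.
Lemma mult_add j k x : mult (j + k) x == oplus (mult j x) (mult k x).
Proof.
  induction j; simpl Nat.add.
  - symmetry; apply oplus_Bot.
  - rewrite mult_S, IHj, mult_S. symmetry; apply oplus_assoc.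
Qed.
Lemma mult_le j k x : (j <= k)%nat -> mult j x <= mult k x.
Proof. intros H. replace k with (j + (k - j)) by lia. rewrite mult_add. apply le_oplus_l. Qed.
Lemma mult_oplus k x y : mult k (oplus x y) == oplus (mult k x) (mult k y).
Proof.
  induction k; [symmetry; apply oplus_Bot|].
  rewrite !mult_S, IHk, !oplus_assoc, <- (oplus_assoc y (mult k x)).
  rewrite (oplus_comm y (mult k x)), !oplus_assoc. reflexivity.
Qed.
Lemma mult_Bot k : mult k Bot == Bot.
Proof. induction k; [reflexivity|]. rewrite mult_S, IHk. apply oplus_Bot. Qed.
Lemma mult_one x : mult 1 x == x. Proof. apply oplus_Bot_r. Qed.

Lemma half_pow_double n : oplus (half_pow (S n)) (half_pow (S n)) == half_pow n.
Proof. apply half_double. Qed.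

Lemma dyadic_double k n : dyadic (2 * k) (S n) == dyadic k n.
Proof.
  unfold dyadic. replace (2 * k) with (k + k) by lia.
  rewrite mult_add, <- mult_oplus. apply mult_cong, half_pow_double.
Qed.
Lemma dyadic_lift k n m : dyadic (2 ^ m * k) (m + n) == dyadic k n.
Proof.
  induction m; [simpl; rewrite Nat.add_0_r; reflexivity|].
  replace (2 ^ S m * k) with (2 * (2 ^ m * k)) by (simpl; lia).
  change (S m + n) with (S (m + n)). rewrite dyadic_double. auto.
Qed.
Lemma dyadic_to_level k n N : (n <= N)%nat -> dyadic (2 ^ (N - n) * k) N == dyadic k n.
Proof. intros H. pose proof (dyadic_lift k n (N - n)) as A. rewrite Nat.sub_add in A; auto. Qed.
Lemma dyadic_full n : dyadic (2 ^ n) n == Top.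
Proof.
  induction n; [apply oplus_Top_l|].
  replace (2 ^ S n) with (2 * 2 ^ n) by (simpl; lia). rewrite dyadic_double. auto.
Qed.
Lemma dyadic_le k j n : (k <= j)%nat -> dyadic k n <= dyadic j n. Proof. apply mult_le. Qed.
Lemma dyadic_add j k n : dyadic (j + k) n == oplus (dyadic j n) (dyadic k n).
Proof. apply mult_add. Qed.
Lemma dyadic_one n : dyadic 1 n == half_pow n. Proof. apply mult_one. Qed.

Lemma dyadic_S_half n :
  (forall k, (k <= 2 ^ n)%nat -> Neg (dyadic k n) == dyadic (2 ^ n - k) n) ->
  (forall k, (k <= 2 ^ n)%nat -> dyadic k (S n) == half (dyadic k n)).
Proof.
  intros N. induction k; intros Hk.
  - symmetry; apply half_Bot.
  - unfold dyadic. rewrite mult_S. fold (dyadic k (S n)). rewrite IHk by lia.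
    change (half_pow (S n)) with (half (half_pow n)).
    rewrite half_oplus; [reflexivity|].
    rewrite N by lia. rewrite <- (mult_one (half_pow n)) at 1.
    apply (dyadic_le 1). lia.
Qed.

Lemma neg_dyadic n : forall k, (k <= 2 ^ n)%nat -> Neg (dyadic k n) == dyadic (2 ^ n - k) n.
Proof.
  induction n; intros k Hk.
  - simpl in Hk. destruct k as [|[|k]]; try lia.
    + change (Neg Bot == mult 1 Top). rewrite mult_one. apply dneg.
    + change (Neg (mult 1 Top) == Bot). rewrite mult_one. reflexivity.
  - pose proof (dyadic_S_half n IHn) as En.
    assert (Hhalf : dyadic (2 ^ n) (S n) == half Top)
      by (rewrite En, dyadic_full by lia; reflexivity).
    assert (Low : forall j, (j <= 2 ^ n)%nat ->
                  Neg (dyadic j (S n)) == dyadic (2 ^ S n - j) (S n)).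
    { intros j Hj. rewrite En, neg_half, IHn by auto.
      rewrite <- En, <- Hhalf, <- dyadic_add by lia.
      replace (2 ^ n + (2 ^ n - j)) with (2 ^ S n - j) by (simpl; lia). reflexivity. }
    destruct (Nat.le_gt_cases k (2 ^ n)) as [H1|H1]; auto.
    assert (H2 : (2 ^ S n - k <= 2 ^ n)%nat) by (simpl in *; lia).
    pose proof (Low _ H2) as C. replace (2 ^ S n - (2 ^ S n - k)) with k in C by lia.
    rewrite <- C. apply dneg.
Qed.

Lemma dyadic_imp A B N : (A <= 2 ^ N)%nat ->
  Imp (dyadic A N) (dyadic B N) == dyadic (2 ^ N - A + B) N.
Proof.
  intros HA. rewrite dyadic_add, <- neg_dyadic by auto. unfold oplus. rewrite dneg. reflexivity.
Qed.

Lemma dyadic_consistent k n : k < 2 ^ n -> F (dyadic k n) -> F Bot.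
Proof.
  intros Hk H.
  assert (H1 : F (dyadic (2 ^ n - 1) n)).
  { refine (le_filter _ _ (dyadic_le k _ n _) H). lia. }
  assert (H2 : Neg (dyadic (2 ^ n - 1) n) == half_pow n).
  { rewrite neg_dyadic by lia.
    replace (2 ^ n - (2 ^ n - 1)) with 1 by (pose proof (Nat.pow_nonzero 2 n); lia).
    apply dyadic_one. }
  assert (H3 : half_pow n <= Bot) by (rewrite <- H2, (filter_eqv_Top _ H1); reflexivity).
  assert (H4 : Top <= Bot)
    by (rewrite <- (dyadic_full n); unfold dyadic; rewrite (mult_mono _ _ _ H3), mult_Bot; reflexivity).
  exact (le_filter _ _ H4 filter_Top).
Qed.
End Dyadic.

(** Doubling; [Nat.iter n dbl x] is the truncated multiple [2^n * x]. *)
Definition dbl (x : Form) : Form := oplus x x.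

Section Archimedean.
Context {T : Form -> Prop} {HT : IsDeltaFilter T}.
Local Notation "x <= y" := (le T x y).
Local Notation "x == y" := (eqv T x y) (at level 70).

Lemma iter_dbl_mono n x y : x <= y -> Nat.iter n dbl x <= Nat.iter n dbl y.
Proof. intros H; induction n; simpl; [exact H|]. apply oplus_le; auto. Qed.

Lemma iter_dbl_half_pow n m : Nat.iter n dbl (half_pow (m + n)) == half_pow m.
Proof.
  revert m; induction n; intros m; [simpl; rewrite Nat.add_0_r; reflexivity|].
  change (dbl (Nat.iter n dbl (half_pow (m + S n))) == half_pow m).
  replace (m + S n) with (S m + n) by lia. unfold dbl at 1. rewrite IHn.
  apply half_pow_double.
Qed.

(** With [e n = 2^n * ~a],
    the formula [X = Delta e] satisfies [X = half ~a (+) X] with no overflow,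
    which forces [half ~a = 0]. *)
Lemma archimedean a : (forall n, Neg a <= half_pow n) -> T a.
Proof.
  intros H. set (d := Neg a). set (e := fun n => Nat.iter n dbl d).
  assert (e_small : forall n, e n <= half Top).
  { intros n. transitivity (Nat.iter n dbl (half_pow (S n))); [apply iter_dbl_mono, H|].
    exact (proj1 (iter_dbl_half_pow n 1)). }
  assert (e_half : forall n, half (e (S n)) == e n) by (intros n; apply half_of_double; auto).
  set (X := Delta e).
  assert (X_fix : X == oplus (half d) X).
  { unfold X at 1. rewrite delta_decomp. change (e O) with d.
    assert (D2 : half (Delta (stail e)) == Delta (fun n => half (stail e n)))
      by (apply ax_eqv; constructor).
    rewrite D2. unfold stail. rewrite (delta_cong _ e e_half). reflexivity. }
  assert (X_small : X <= half Top).
  { transitivity (Delta (sconst (half Top))); [apply delta_mono; auto|].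
    exact (proj1 (delta_const _)). }
  assert (half_d : half d == Bot).
  { apply (oplus_absorb_Bot (half d) X); [symmetry; auto|].
    rewrite X_small, neg_half_Top. apply half_le_half_Top. }
  assert (d_Bot : d == Bot) by (rewrite <- (half_double d), half_d; apply oplus_Bot).
  apply eqv_Top_filter. rewrite <- (dneg a). fold d. rewrite d_Bot. apply dneg.
Qed.
End Archimedean.

Definition ipow (n : nat) (a z : Form) : Form := Nat.iter n (Imp a) z.
Definition generated (F : Form -> Prop) (a : Form) : Form -> Prop :=
  fun z => exists n, F (ipow n a z).

Section Generated.
Context {F : Form -> Prop} {HF : IsFilter F}.
Local Notation "x <= y" := (le F x y).

Lemma ipow_mono n a x y : x <= y -> ipow n a x <= ipow n a y.
Proof. intros H; induction n; [exact H|]. apply imp_mono_r; auto. Qed.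
Lemma ipow_weaken n a x : x <= ipow n a x.
Proof. induction n; [apply le_refl|]. eapply le_trans; [exact IHn|apply ax_K]. Qed.
Lemma ipow_exch m a x y : ipow m a (Imp x y) <= Imp x (ipow m a y).
Proof.
  induction m; [apply le_refl|].
  eapply le_trans; [apply imp_mono_r; exact IHm|apply imp_exch].
Qed.
Lemma ipow_add n m a z : ipow (n + m) a z = ipow n a (ipow m a z).
Proof. apply Nat.iter_add. Qed.

Lemma generated_filter a : IsFilter (generated F a).
Proof.
  split.
  - intros x Hx. exists 0. apply filter_thm, Hx.
  - intros x y [n Hn] [m Hm]. exists (n + m). rewrite ipow_add.
    pose proof (filter_mp _ _ Hm (ipow_exch m a x y)) as H1.
    exact (filter_mp _ _ Hn (ipow_mono n a _ _ H1)).
Qed.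

Lemma ipow_cases_r x y m p : F (Imp (Imp x y) p) -> F (ipow m (Imp y x) p) -> F p.
Proof.
  revert p; induction m; intros p H1 H2; [exact H2|].
  set (p' := ipow m (Imp y x) p) in *.
  assert (H3 : F (Imp (Imp x y) p')) by exact (filter_mp _ _ H1 (imp_mono_r _ _ _ (ipow_weaken m _ p))).
  exact (IHm p H1 (prelinear_cases x y p' H3 H2)).
Qed.
Lemma ipow_cases x y n m p : F (ipow n (Imp x y) p) -> F (ipow m (Imp y x) p) -> F p.
Proof.
  revert p; induction n; intros p H1 H2; [exact H1|].
  set (p' := ipow n (Imp x y) p) in *.
  assert (H3 : F (ipow m (Imp y x) p')) by exact (filter_mp _ _ H2 (ipow_mono m _ _ _ (ipow_weaken n _ p))).
  exact (IHn p (ipow_cases_r x y m p' H1 H3) H2).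
Qed.
End Generated.

Section LinearExtension.
Context {T : Form -> Prop} {HT : IsFilter T} (b : Form).

Definition omitting (B : Form -> Prop) : Prop :=
  IsFilter B /\ (forall x, T x -> B x) /\ ~ B b.

(** Zorn's lemma is applied to the omitting filters together with the empty
    set (the union of the empty chain). *)
Definition zorn_candidate (B : Form -> Prop) : Prop := (forall x, ~ B x) \/ omitting B.

Lemma chain_union_candidate (Fam : (Form -> Prop) -> Prop) :
  classical_sets.subset Fam zorn_candidate ->
  classical_sets.total_on Fam classical_sets.subset ->
  zorn_candidate (classical_sets.bigcup Fam (fun X => X)).
Proof.
  intros Hsub Htot.
  destruct (classic (exists X, Fam X /\ exists x, X x)) as [[X0 [HX0 [x0 Hx0]]]|Hno].
  2: { left. intros x [X HX Hx]. apply Hno; eauto. }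
  assert (GX : forall X, Fam X -> (exists x, X x) -> omitting X).
  { intros X HX [x Hx]. destruct (Hsub X HX) as [Hn|Hy]; [exfalso; exact (Hn x Hx)|exact Hy]. }
  destruct (GX X0 HX0 (ex_intro _ _ Hx0)) as [FX0 [TX0 _]].
  right. split; [split|split].
  - intros x Hx. exists X0; [exact HX0|exact (@filter_thm X0 FX0 x Hx)].
  - intros x y [X HX Hx] [Y HY Hy].
    destruct (GX X HX (ex_intro _ _ Hx)) as [FX _], (GX Y HY (ex_intro _ _ Hy)) as [FY _].
    destruct (Htot X Y HX HY) as [S|S].
    + exists Y; [exact HY|exact (@filter_mp Y FY x y (S x Hx) Hy)].
    + exists X; [exact HX|exact (@filter_mp X FX x y Hx (S _ Hy))].
  - intros x Hx. exists X0; auto.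
  - intros [X HX Hxb]. destruct (GX X HX (ex_intro _ _ Hxb)) as [_ [_ Hn]]; auto.
Qed.

Lemma maximal_omitting : ~ T b ->
  exists A, omitting A /\ (forall a, ~ A a -> exists n, A (ipow n a b)).
Proof.
  intros Hb.
  destruct (classical_sets.Zorn_bigcup chain_union_candidate)
    as [A [GA MA]].
  destruct GA as [Aempty|[FA [TA bA]]].
  - exfalso. apply (MA T); [split|right; exact (conj HT (conj (fun x Hx => Hx) Hb))].
    + intros x Hx; exfalso; eapply Aempty; eauto.
    + intros Hs. apply (Aempty Top), Hs, filter_Top.
  - exists A. split; [exact (conj FA (conj TA bA))|].
    intros a Ha. apply NNPP. intros Hn. apply (MA (generated A a)).
    + split; [intros x Hx; exists 0; exact Hx|].
      intros Hs. apply Ha, Hs. exists 1. apply imp_refl.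
    + right. split; [apply generated_filter|split].
      * intros x Hx. exists 0. exact (TA x Hx).
      * intros [n Hnb]. apply Hn; eauto.
Qed.

Lemma linear_extension : ~ T b -> exists F, omitting F /\ (forall x y, F (Imp x y) \/ F (Imp y x)).
Proof.
  intros Hb. destruct (maximal_omitting Hb) as [A [[FA [TA bA]] Max]].
  exists A. split; [exact (conj FA (conj TA bA))|].
  intros x y. apply NNPP. intros Hxy.
  destruct (Max (Imp x y)) as [n Hn]; [intro; apply Hxy; auto|].
  destruct (Max (Imp y x)) as [m Hm]; [intro; apply Hxy; auto|].
  exact (bA (ipow_cases x y n m b Hn Hm)).
Qed.
End LinearExtension.

(** A proof packaged as data, so that countably many proofs can be chosen. *)
Record ProofData (Th : Form -> Prop) (phi : Form) : Type := mkProof {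
  pf_idx : Type; pf_lt : pf_idx -> pf_idx -> Prop; pf_top : pf_idx;
  pf_lab : pf_idx -> Form;
  pf_ok : is_proof Th phi pf_idx pf_lt pf_top pf_lab }.
Arguments pf_idx {Th phi}. Arguments pf_lt {Th phi}. Arguments pf_top {Th phi}.
Arguments pf_lab {Th phi}. Arguments pf_ok {Th phi}.

Lemma choose_proof Th phi : Provable Th phi -> ProofData Th phi.
Proof.
  intros H.
  apply constructive_indefinite_description in H. destruct H as [I H].
  apply constructive_indefinite_description in H. destruct H as [lt H].
  apply constructive_indefinite_description in H. destruct H as [top H].
  apply constructive_indefinite_description in H. destruct H as [a H].
  exact (mkProof Th phi I lt top a H).
Qed.

(** Gluing: given proofs [P n] of formulas [fam n], and a formula [phi] that is
    an axiom, a hypothesis, or follows from the [fam n] by one rule, the proofs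
    laid one after another (lexicographically on (n, position)) followed by
    [phi] form a proof of [phi]. *)
Section Glue.
Variable Th : Form -> Prop.
Variable fam : nat -> Form.
Variable P : forall n, ProofData Th (fam n).
Variable phi : Form.
Hypothesis J : IsAxiom phi \/ Th phi \/ (exists n1 n2, fam n2 = Imp (fam n1) phi) \/
               phi = Delta fam.

Definition GIdx := {n : nat & pf_idx (P n)}.
Definition gidx_lt (x y : GIdx) : Prop :=
  projT1 x < projT1 y \/
  (exists n (i j : pf_idx (P n)), x = existT _ n i /\ y = existT _ n j /\ pf_lt (P n) i j).
Definition glued_lt (x y : option GIdx) : Prop :=
  match x, y with
  | Some x, Some y => gidx_lt x y
  | Some _, None => True
  | None, _ => False
  end.
Definition glued_lab (x : option GIdx) : Form :=
  match x with Some (existT _ n i) => pf_lab (P n) i | None => phi end.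

Lemma existT_snd n i j : existT (fun n => pf_idx (P n)) n i = existT _ n j -> i = j.
Proof. apply inj_pair2_eq_dec, Nat.eq_dec. Qed.
Lemma existT_fst n m i j : existT (fun n => pf_idx (P n)) n i = existT _ m j -> n = m.
Proof. intros H. exact (f_equal (@projT1 _ _) H). Qed.
Ltac invert_existT := repeat match goal with
  | H : existT _ ?n ?i = existT _ ?m ?j |- _ =>
      let e := fresh in assert (e := existT_fst _ _ _ _ H); subst n || subst m;
      apply existT_snd in H; subst
  end.

Lemma glued_wf : well_founded glued_lt.
Proof.
  assert (acc_some : forall n i, Acc glued_lt (Some (existT _ n i))).
  { intros n. induction n as [n IHn] using lt_wf_ind.
    destruct (pf_ok (P n)) as [Wn _].
    intros i. induction i as [i IHi] using (well_founded_ind Wn).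
    constructor. intros [[m j]|] H; simpl in H; [|contradiction].
    destruct H as [H|(n' & i' & j' & E1 & E2 & H)].
    - apply IHn; auto.
    - invert_existT. apply IHi; auto. }
  intros [[n i]|]; [apply acc_some|].
  constructor. intros [[n i]|] H; [apply acc_some|contradiction].
Qed.

Lemma glued_trans x y z : glued_lt x y -> glued_lt y z -> glued_lt x z.
Proof.
  destruct x as [[n i]|], y as [[m j]|], z as [[k l]|]; simpl; auto; try contradiction.
  intros [H1|(n1 & i1 & j1 & E1 & E2 & H1)] [H2|(n2 & i2 & j2 & E3 & E4 & H2)];
    invert_existT; simpl in *; try (left; simpl; lia).
  right. eexists _, _, _. split; [reflexivity|]. split; [reflexivity|].
  match goal with |- pf_lt (P ?n) _ _ => destruct (pf_ok (P n)) as [_ [Tr _]] end. eauto.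
Qed.

Lemma glued_total x y : glued_lt x y \/ x = y \/ glued_lt y x.
Proof.
  destruct x as [[n i]|], y as [[m j]|]; simpl; auto.
  destruct (lt_eq_lt_dec n m) as [[H|H]|H]; [left; left; auto| |right; right; left; auto].
  subst m. destruct (pf_ok (P n)) as [_ [_ [Tot _]]].
  destruct (Tot i j) as [H|[H|H]].
  - left. right. exists n, i, j. auto.
  - subst; auto.
  - right; right. right. exists n, j, i. auto.
Qed.

Lemma glued_countable : exists enc : option GIdx -> nat, forall x y, enc x = enc y -> x = y.
Proof.
  assert (E : forall n, {e : pf_idx (P n) -> nat | forall i j, e i = e j -> i = j}).
  { intros n. apply constructive_indefinite_description.
    destruct (pf_ok (P n)) as [_ [_ [_ [C _]]]]. exact C. }
  exists (fun x => match x with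
                   | None => 0
                   | Some (existT _ n i) => S (Cantor.to_nat (n, proj1_sig (E n) i)) end).
  intros [[n i]|] [[m j]|] H; try discriminate; auto.
  assert (H' : Cantor.to_nat (n, proj1_sig (E n) i) = Cantor.to_nat (m, proj1_sig (E m) j))
    by (injection H as H; exact H).
  apply Cantor.to_nat_inj in H'. injection H' as Hnm Hij. subst m.
  apply (proj2_sig (E n)) in Hij. subst; auto.
Qed.

Lemma glue_proofs : Provable Th phi.
Proof.
  exists (option GIdx), glued_lt, None, glued_lab.
  split; [exact glued_wf|]. split; [exact glued_trans|]. split; [exact glued_total|].
  split; [exact glued_countable|]. split; [intros [x|]; simpl; auto|]. split; [reflexivity|].
  intros [[n i]|].
  - simpl. destruct (pf_ok (P n)) as [_ [_ [_ [_ [_ [_ Hj]]]]]].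
    destruct (Hj i) as [H|[H|[(j & k & Hjl & Hkl & Hk)|(g & Hg & Hd)]]]; auto.
    + right; right; left. exists (Some (existT _ n j)), (Some (existT _ n k)).
      split; [right; exists n, j, i; auto|]. split; [right; exists n, k, i; auto|exact Hk].
    + right; right; right. exists (fun m => Some (existT _ n (g m))).
      split; [intros m; right; exists n, (g m), i; auto|exact Hd].
  - assert (Htop : forall m, pf_lab (P m) (pf_top (P m)) = fam m)
      by (intros m; destruct (pf_ok (P m)) as [_ [_ [_ [_ [_ [Tm _]]]]]]; exact Tm).
    simpl. destruct J as [H|[H|[(n1 & n2 & H)|H]]]; auto.
    + right; right; left.
      exists (Some (existT _ n1 (pf_top (P n1)))), (Some (existT _ n2 (pf_top (P n2)))).
      simpl. rewrite !Htop. auto.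
    + right; right; right. exists (fun m => Some (existT _ m (pf_top (P m)))).
      split; [intros; simpl; auto|]. rewrite H. f_equal.
      apply functional_extensionality. intros m. simpl. symmetry; apply Htop.
Qed.
End Glue.

Lemma provable_base Th phi : IsAxiom phi \/ Th phi -> Provable Th phi.
Proof.
  intros H. exists unit, (fun _ _ => False), tt, (fun _ => phi).
  split; [intros x; constructor; intros y []|]. split; [intros ? ? ? []|].
  split; [intros [] []; auto|]. split; [exists (fun _ => 0); intros [] []; auto|].
  split; [intros []; auto|]. split; [reflexivity|]. intros _. destruct H; auto.
Qed.

Lemma Der_Provable Th phi : Der Th phi -> Provable Th phi.
Proof.
  induction 1 as [x Hx|x Hx|x y _ IH1 _ IH2|s _ IH].
  - apply provable_base; auto.
  - apply provable_base; auto.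
  - set (fam := fun n => match n with 0 => x | S _ => Imp x y end).
    set (P := fun n => match n return ProofData Th (fam n) with
                       | 0 => choose_proof _ _ IH1 | S _ => choose_proof _ _ IH2 end).
    apply (glue_proofs Th fam P y). right; right; left. exists 0, 1. reflexivity.
  - apply (glue_proofs Th s (fun n => choose_proof _ _ (IH n)) (Delta s)).
    right; right; right. reflexivity.
Qed.

Open Scope R_scope.

Definition dyr (k n : nat) : R := INR k / 2 ^ n.

Lemma pow2_pos n : 0 < 2 ^ n. Proof. apply pow_lt; lra. Qed.
Lemma INR_pow2 n : INR (2 ^ n)%nat = 2 ^ n.
Proof. rewrite pow_INR. simpl. replace (1 + 1) with 2 by lra. reflexivity. Qed.

Lemma dyr_le_iff k n r : dyr k n <= r <-> INR k <= r * 2 ^ n.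
Proof.
  unfold dyr. pose proof (pow2_pos n). split; intros H0.
  - apply Rmult_le_compat_r with (r := 2 ^ n) in H0; [|lra].
    field_simplify in H0; lra.
  - apply Rmult_le_reg_r with (2 ^ n); auto. field_simplify; lra.
Qed.
Lemma dyr_gt_iff k n r : r < dyr k n <-> r * 2 ^ n < INR k.
Proof.
  pose proof (dyr_le_iff k n r). split; intros H0.
  - destruct (Rlt_le_dec (r * 2 ^ n) (INR k)); [auto|]. apply H in r0. lra.
  - destruct (Rlt_le_dec r (dyr k n)); [auto|]. apply H in r0. lra.
Qed.

Lemma dyr_nat_le j k n : dyr j n <= dyr k n -> (j <= k)%nat.
Proof.
  intros H. apply dyr_le_iff in H. unfold dyr in H. pose proof (pow2_pos n).
  replace (INR k / 2 ^ n * 2 ^ n) with (INR k) in H by (field; lra). apply INR_le, H.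
Qed.
Lemma dyr_nat_lt j k n : dyr j n < dyr k n -> (j < k)%nat.
Proof.
  intros H. apply dyr_gt_iff in H. unfold dyr in H. pose proof (pow2_pos n).
  replace (INR j / 2 ^ n * 2 ^ n) with (INR j) in H by (field; lra). apply INR_lt, H.
Qed.

Lemma dyr_le1 k n : (k <= 2 ^ n)%nat -> dyr k n <= 1.
Proof. intros H. apply (proj2 (dyr_le_iff k n 1)). rewrite Rmult_1_l, <- INR_pow2. apply le_INR, H. Qed.
Lemma dyr_full n : dyr (2 ^ n) n = 1.
Proof. unfold dyr. rewrite INR_pow2. pose proof (pow2_pos n). field. lra. Qed.
Lemma dyr_0 n : dyr 0 n = 0. Proof. unfold dyr. simpl. pose proof (pow2_pos n). field. lra. Qed.
Lemma dyr_double k n : dyr (2 * k) n = 2 * dyr k n.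
Proof. unfold dyr. rewrite mult_INR. simpl INR. pose proof (pow2_pos n). field. lra. Qed.
Lemma dyr_S k n : dyr (S k) n = dyr k n + / 2 ^ n.
Proof. unfold dyr. rewrite S_INR. pose proof (pow2_pos n). field. lra. Qed.
Lemma dyr_lift k n m : dyr (2 ^ m * k) (m + n) = dyr k n.
Proof.
  unfold dyr. rewrite mult_INR, INR_pow2, pow_add.
  pose proof (pow2_pos n); pose proof (pow2_pos m). field. lra.
Qed.
Lemma dyr_to_level k n N : (n <= N)%nat -> dyr (2 ^ (N - n) * k) N = dyr k n.
Proof. intros H. pose proof (dyr_lift k n (N - n)) as A. rewrite Nat.sub_add in A; auto. Qed.
Lemma dyr_compl_add A B N : (A <= 2 ^ N)%nat -> dyr (2 ^ N - A + B) N = 1 - dyr A N + dyr B N.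
Proof.
  intros H. unfold dyr. rewrite plus_INR, minus_INR, INR_pow2 by auto.
  pose proof (pow2_pos N). field. lra.
Qed.
Lemma dyr_compl k n : (k <= 2 ^ n)%nat -> dyr (2 ^ n - k) n = 1 - dyr k n.
Proof. intros H. rewrite <- (Nat.add_0_r (2 ^ n - k)), dyr_compl_add by auto. unfold dyr. simpl. lra. Qed.

Lemma pow2_small eps n : 0 < eps -> exists N, (n <= N)%nat /\ / 2 ^ N < eps.
Proof.
  intros He. destruct (pow_lt_1_zero (/ 2) ltac:(rewrite Rabs_pos_eq; lra) eps He) as [N0 HN].
  exists (Nat.max N0 n). split; [lia|]. specialize (HN (Nat.max N0 n) ltac:(lia)).
  rewrite Rabs_pos_eq, pow_inv in HN by (apply pow_le; lra). exact HN.
Qed.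

Lemma dyadic_floor r N : 0 <= r <= 1 ->
  exists k, (k <= 2 ^ N)%nat /\ dyr k N <= r /\ r < dyr (S k) N.
Proof.
  intros Hr. pose proof (pow2_pos N). set (x := r * 2 ^ N).
  destruct (archimed x) as [A1 A2].
  assert (Hz : (1 <= up x)%Z).
  { enough (0 < up x)%Z by lia. apply lt_IZR. assert (0 <= x) by (apply Rmult_le_pos; lra). lra. }
  assert (E : INR (Z.to_nat (up x - 1)) = IZR (up x) - 1)
    by (rewrite INR_IZR_INZ, Z2Nat.id, minus_IZR by lia; reflexivity).
  exists (Z.to_nat (up x - 1)).
  assert (Hle : dyr (Z.to_nat (up x - 1)) N <= r) by (apply dyr_le_iff; fold x; lra).
  split; [|split; [exact Hle|]].
  - apply dyr_nat_le with N. rewrite dyr_full. lra.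
  - apply dyr_gt_iff. rewrite S_INR, E. fold x. lra.
Qed.

Lemma density a b : 0 <= a -> a < b -> b <= 1 ->
  exists k n, (k <= 2 ^ n)%nat /\ a < dyr k n /\ dyr k n < b.
Proof.
  intros Ha Hab Hb. destruct (pow2_small (b - a) 0 ltac:(lra)) as (N & _ & HN).
  destruct (dyadic_floor a N ltac:(lra)) as (k & _ & Hk1 & Hk2).
  rewrite dyr_S in Hk2. exists (S k), N. rewrite dyr_S. split; [|lra].
  apply dyr_nat_le with N. rewrite dyr_S, dyr_full. lra.
Qed.

Section LinearValuation.
Context {F : Form -> Prop} {HF : IsFilter F}.
Hypothesis consistent : ~ F Bot.
Hypothesis linear : forall x y, F (Imp x y) \/ F (Imp y x).

Definition below (psi : Form) (r : R) : Prop :=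
  exists k n, (k <= 2 ^ n)%nat /\ r = dyr k n /\ le F (dyadic k n) psi.

Lemma below_bound psi : bound (below psi).
Proof. exists 1. intros r (k & n & Hk & -> & _). apply dyr_le1; auto. Qed.
Lemma below_inhabited psi : exists r, below psi r.
Proof. exists (dyr 0 0), 0%nat, 0%nat. split; [simpl; lia|]. split; [reflexivity|apply Bot_le]. Qed.

Definition value (psi : Form) : R :=
  proj1_sig (completeness (below psi) (below_bound psi) (below_inhabited psi)).

Lemma value_lub psi : is_lub (below psi) (value psi).
Proof. unfold value. destruct completeness; auto. Qed.

Lemma value_ge k n psi : (k <= 2 ^ n)%nat -> le F (dyadic k n) psi -> dyr k n <= value psi.
Proof. intros. apply (value_lub psi). exists k, n. auto. Qed.

Lemma dyadic_order_real j m k n : (j <= 2 ^ m)%nat -> (k <= 2 ^ n)%nat ->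
  le F (dyadic j m) (dyadic k n) -> dyr j m <= dyr k n.
Proof.
  intros Hj Hk H. destruct (Rle_lt_dec (dyr j m) (dyr k n)) as [|Hlt]; auto.
  exfalso. apply consistent.
  rewrite <- (dyr_lift j m n), <- (dyr_lift k n m), (Nat.add_comm n m) in Hlt.
  apply dyr_nat_lt in Hlt.
  rewrite <- (dyadic_lift j m n), <- (dyadic_lift k n m), (Nat.add_comm n m) in H.
  assert (HJ : (2 ^ n * j <= 2 ^ (m + n))%nat) by (rewrite Nat.pow_add_r; nia).
  apply (dyadic_consistent (2 ^ (m + n) - 2 ^ n * j + 2 ^ m * k) (m + n)); [lia|].
  rewrite <- dyadic_imp by exact HJ. exact H.
Qed.

Lemma value_le k n psi : (k <= 2 ^ n)%nat -> le F psi (dyadic k n) -> value psi <= dyr k n.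
Proof.
  intros Hk H. apply (value_lub psi). intros r (j & m & Hj & -> & Hc).
  apply dyadic_order_real; auto. eapply le_trans; eauto.
Qed.

Lemma value_gt_dyadic k n psi : (k <= 2 ^ n)%nat -> dyr k n < value psi -> le F (dyadic k n) psi.
Proof.
  intros Hk H. destruct (linear (dyadic k n) psi) as [|H2]; auto.
  pose proof (value_le _ _ _ Hk H2). lra.
Qed.
Lemma value_lt_dyadic k n psi : (k <= 2 ^ n)%nat -> value psi < dyr k n -> le F psi (dyadic k n).
Proof.
  intros Hk H. destruct (linear (dyadic k n) psi) as [H2|]; auto.
  pose proof (value_ge _ _ _ Hk H2). lra.
Qed.

Lemma value_range psi : 0 <= value psi <= 1.
Proof.
  split.
  - pose proof (value_ge 0 0 psi ltac:(simpl; lia) (Bot_le psi)). rewrite dyr_0 in H. exact H.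
  - apply (value_lub psi). intros r (k & n & Hk & -> & _). apply dyr_le1; auto.
Qed.

Lemma value_cong x y : eqv F x y -> value x = value y.
Proof.
  intros H. apply Rle_antisym; apply (value_lub _); intros r (k & n & Hk & -> & Hc);
  apply (value_lub _); exists k, n; repeat split; auto; [rewrite <- H|rewrite H]; auto.
Qed.

Lemma value_by_cut psi a : 0 <= a <= 1 ->
  (forall k n, (k <= 2 ^ n)%nat -> dyr k n < a -> le F (dyadic k n) psi) ->
  (forall k n, (k <= 2 ^ n)%nat -> a < dyr k n -> le F psi (dyadic k n)) -> value psi = a.
Proof.
  intros Ha H1 H2. pose proof (value_range psi).
  destruct (Rtotal_order (value psi) a) as [Hl|[Heq|Hg]]; auto.
  - destruct (density (value psi) a) as (k & n & Hk & A1 & A2); try lra.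
    pose proof (value_ge _ _ _ Hk (H1 _ _ Hk A2)). lra.
  - destruct (density a (value psi)) as (k & n & Hk & A1 & A2); try lra.
    pose proof (value_le _ _ _ Hk (H2 _ _ Hk A1)). lra.
Qed.

Lemma approx_below psi N : exists A, (A <= 2 ^ N)%nat /\ le F (dyadic A N) psi /\
  value psi - 2 * / 2 ^ N <= dyr A N.
Proof.
  destruct (dyadic_floor (value psi) N (value_range psi)) as (k & Hk & H1 & H2).
  rewrite dyr_S in H2. destruct k as [|k].
  - exists 0%nat. split; [lia|]. split; [apply Bot_le|]. rewrite dyr_0 in *.
    pose proof (pow2_pos N). pose proof (Rinv_0_lt_compat _ H). lra.
  - rewrite dyr_S in H1, H2. pose proof (Rinv_0_lt_compat _ (pow2_pos N)).
    exists k. split; [lia|]. split; [|lra].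
    apply value_gt_dyadic; [lia|lra].
Qed.

Lemma approx_above psi N : exists B, (B <= 2 ^ N)%nat /\ le F psi (dyadic B N) /\
  dyr B N <= value psi + / 2 ^ N.
Proof.
  destruct (dyadic_floor (value psi) N (value_range psi)) as (k & Hk & H1 & H2).
  pose proof (Rinv_0_lt_compat _ (pow2_pos N)).
  destruct (Nat.eq_dec k (2 ^ N)) as [->|Hne].
  - exists (2 ^ N)%nat. split; [lia|]. split; [rewrite dyadic_full; apply le_Top|lra].
  - exists (S k). split; [lia|]. split; [apply value_lt_dyadic; [lia|lra]|].
    rewrite dyr_S. lra.
Qed.

Lemma value_neg x : value (Neg x) = 1 - value x.
Proof.
  pose proof (value_range x) as Hx. apply value_by_cut; [lra| |];
    intros k n Hk H; assert (Hk' : (2 ^ n - k <= 2 ^ n)%nat) by lia;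
    pose proof (dyr_compl k n Hk).
  - assert (H2 : le F x (dyadic (2 ^ n - k) n)) by (apply value_lt_dyadic; auto; lra).
    apply neg_anti in H2. rewrite neg_dyadic, Nat.sub_sub_distr, Nat.sub_diag in H2 by auto.
    exact H2.
  - assert (H2 : le F (dyadic (2 ^ n - k) n) x) by (apply value_gt_dyadic; auto; lra).
    apply neg_anti in H2. rewrite neg_dyadic, Nat.sub_sub_distr, Nat.sub_diag in H2 by auto.
    exact H2.
Qed.

(** The two halves of the cut characterising [value (Imp x y)]: approximate
    [x] from above and [y] from below (resp. the reverse) at a fine level [N]
    and use [dyadic_imp]. *)
Lemma value_imp_lower x y k n : (k <= 2 ^ n)%nat ->
  dyr k n < Rmin 1 (1 - value x + value y) -> le F (dyadic k n) (Imp x y).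
Proof.
  intros Hk H. assert (Hgap : dyr k n < 1 - value x + value y)
    by (eapply Rlt_le_trans; [exact H|apply Rmin_r]).
  destruct (pow2_small ((1 - value x + value y - dyr k n) / 3) n) as (N & HnN & HN); [lra|].
  destruct (approx_below y N) as (B & HB & HBy & HBv).
  destruct (approx_above x N) as (A & HA & HAx & HAv).
  rewrite <- (dyadic_to_level k n N HnN).
  transitivity (Imp (dyadic A N) (dyadic B N)); [|apply le_imp; auto].
  rewrite dyadic_imp by exact HA. apply dyadic_le, (dyr_nat_le _ _ N).
  rewrite dyr_compl_add, dyr_to_level by auto. lra.
Qed.

Lemma value_imp_upper x y k n : (k <= 2 ^ n)%nat ->
  Rmin 1 (1 - value x + value y) < dyr k n -> le F (Imp x y) (dyadic k n).
Proof.
  intros Hk H. pose proof (dyr_le1 _ _ Hk).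
  assert (Hgap : 1 - value x + value y < dyr k n).
  { destruct (Rle_lt_dec (1 - value x + value y) 1).
    - rewrite Rmin_right in H; auto.
    - rewrite Rmin_left in H; lra. }
  destruct (pow2_small ((dyr k n - (1 - value x + value y)) / 3) n) as (N & HnN & HN); [lra|].
  destruct (approx_below x N) as (A & HA & HAx & HAv).
  destruct (approx_above y N) as (B & HB & HBy & HBv).
  rewrite <- (dyadic_to_level k n N HnN).
  transitivity (Imp (dyadic A N) (dyadic B N)); [apply le_imp; auto|].
  rewrite dyadic_imp by exact HA. apply dyadic_le, Nat.lt_le_incl, (dyr_nat_lt _ _ N).
  rewrite dyr_compl_add, dyr_to_level by auto. lra.
Qed.

Lemma value_imp x y : value (Imp x y) = Rmin 1 (1 - value x + value y).
Proof.
  pose proof (value_range x); pose proof (value_range y).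
  apply value_by_cut.
  - split; [apply Rmin_glb; lra|apply Rmin_l].
  - intros k n; apply value_imp_lower.
  - intros k n; apply value_imp_upper.
Qed.

Lemma value_oplus a b : value (oplus a b) = Rmin 1 (value a + value b).
Proof. unfold oplus. rewrite value_imp, value_neg. f_equal. ring. Qed.

Lemma value_half x : value (half x) = value x / 2.
Proof.
  pose proof (value_range x) as Hx. apply value_by_cut; [lra| |]; intros k n Hk Hkx.
  - assert (Hlt : dyr (2 * k) n < value x) by (rewrite dyr_double; lra).
    assert (H2k : (2 * k <= 2 ^ n)%nat)
      by (apply Nat.lt_le_incl, (dyr_nat_lt _ _ n); rewrite dyr_full; lra).
    rewrite <- (dyadic_double k n), (dyadic_S_half n (neg_dyadic n) _ H2k).
    apply half_mono, value_gt_dyadic; auto.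
  - set (m := Nat.min (2 * k) (2 ^ n)).
    assert (Hm : le F x (dyadic m n)).
    { unfold m. destruct (Nat.le_gt_cases (2 ^ n) (2 * k)).
      - rewrite Nat.min_r, dyadic_full by auto. apply le_Top.
      - rewrite Nat.min_l by lia. apply value_lt_dyadic; [lia|]. rewrite dyr_double. lra. }
    apply half_mono in Hm. rewrite <- (dyadic_S_half n (neg_dyadic n)) in Hm by (unfold m; lia).
    rewrite Hm, <- (dyadic_double k n). apply dyadic_le. unfold m; lia.
Qed.

Lemma value_decomp s : value (Delta s) = value (s O) / 2 + value (Delta (stail s)) / 2.
Proof.
  rewrite (value_cong _ _ (delta_decomp s)), value_oplus, !value_half.
  pose proof (value_range (s O)); pose proof (value_range (Delta (stail s))).
  apply Rmin_right. lra.
Qed.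

Lemma iter_stail k s n : Nat.iter k stail s n = s (k + n)%nat.
Proof. revert n; induction k; intros n; [reflexivity|]. simpl. unfold stail. rewrite IHk. f_equal. lia. Qed.

Lemma value_partial s N :
  sum_f_R0 (fun i => value (s i) / 2 ^ (S i)) N
  + value (Delta (Nat.iter (S N) stail s)) / 2 ^ (S N) = value (Delta s).
Proof.
  induction N.
  - simpl. rewrite (value_decomp s). field.
  - rewrite <- IHN. simpl sum_f_R0. rewrite (value_decomp (Nat.iter (S N) stail s)).
    rewrite iter_stail, Nat.add_0_r.
    change (stail (Nat.iter (S N) stail s)) with (Nat.iter (S (S N)) stail s).
    pose proof (pow2_pos N). simpl pow. field. lra.
Qed.

(** The remainder is at most [2^-(N+1)], so the series converges to the value. *)
Lemma value_delta s : infinite_sum (fun n => value (s n) / 2 ^ (S n)) (value (Delta s)).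
Proof.
  intros eps He. destruct (pow2_small eps 0 He) as (N & _ & HN).
  exists N. intros n Hn. unfold R_dist. rewrite <- (value_partial s n).
  pose proof (value_range (Delta (Nat.iter (S n) stail s))).
  set (rest := value (Delta (Nat.iter (S n) stail s))) in *.
  replace (sum_f_R0 (fun i => value (s i) / 2 ^ S i) n -
           (sum_f_R0 (fun i => value (s i) / 2 ^ S i) n + rest / 2 ^ S n))
    with (- (rest / 2 ^ S n)) by ring.
  rewrite Rabs_Ropp.
  assert (Hpow : 2 ^ N <= 2 ^ S n) by (apply Rle_pow; [lra|lia]).
  pose proof (pow2_pos N); pose proof (pow2_pos (S n)).
  assert (/ 2 ^ S n <= / 2 ^ N) by (apply Rinv_le_contravar; lra).
  rewrite Rabs_pos_eq; unfold Rdiv; [|apply Rmult_le_pos; [lra|left; apply Rinv_0_lt_compat; lra]].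
  apply Rle_lt_trans with (/ 2 ^ S n); [|lra].
  rewrite <- (Rmult_1_l (/ 2 ^ S n)) at 2. apply Rmult_le_compat_r; [left; apply Rinv_0_lt_compat|]; lra.
Qed.

Lemma value_valuation : valuation value.
Proof.
  split; [exact value_range|split; [exact value_neg|split; [exact value_imp|exact value_delta]]].
Qed.

Lemma value_of_filter x : F x -> value x = 1.
Proof.
  intros H. apply value_by_cut; [lra| |].
  - intros k n _ _. apply filter_le, H.
  - intros k n Hk Hl. pose proof (dyr_le1 _ _ Hk). lra.
Qed.

Lemma value_lt_1 a n : le F a (Neg (half_pow n)) -> value a < 1.
Proof.
  intros H. pose proof (Nat.pow_nonzero 2 n ltac:(lia)).
  rewrite <- dyadic_one, neg_dyadic in H by lia.
  pose proof (value_le (2 ^ n - 1)%nat n a ltac:(lia) H) as Hv. rewrite dyr_compl in Hv by lia.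
  assert (0 < dyr 1 n) by (unfold dyr; simpl; pose proof (pow2_pos n);
                           apply Rmult_lt_0_compat; [lra|apply Rinv_0_lt_compat; lra]).
  lra.
Qed.
End LinearValuation.

Lemma infinite_sum_lin a b la lb p q : infinite_sum a la -> infinite_sum b lb ->
  infinite_sum (fun n => p * a n + q * b n) (p * la + q * lb).
Proof.
  intros Ha Hb.
  assert (U : Un_cv (fun N => p * sum_f_R0 a N + q * sum_f_R0 b N) (p * la + q * lb)).
  { apply CV_plus; apply (CV_mult (fun _ => _)); auto; intros e He; exists 0%nat; intros;
      unfold R_dist; rewrite Rminus_diag, Rabs_R0; auto. }
  intros e He. destruct (U e He) as [N HN]. exists N. intros n Hn.
  replace (sum_f_R0 (fun n => p * a n + q * b n) n) with (p * sum_f_R0 a n + q * sum_f_R0 b n);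
    [auto|clear; induction n; simpl; [|rewrite <- IHn]; ring].
Qed.
Lemma infinite_sum_ext a b l : (forall n, a n = b n) -> infinite_sum a l -> infinite_sum b l.
Proof.
  intros E H e He. destruct (H e He) as [N HN]. exists N; intros n Hn.
  replace (sum_f_R0 b n) with (sum_f_R0 a n); [auto|].
  clear - E. induction n; simpl; rewrite ?IHn, E; auto.
Qed.
Lemma infinite_sum_scale a l p : infinite_sum a l -> infinite_sum (fun n => p * a n) (p * l).
Proof.
  intros H. replace (p * l) with (p * l + 0 * l) by ring.
  apply (infinite_sum_ext (fun n => p * a n + 0 * a n)); [intros; ring|].
  apply infinite_sum_lin; auto.
Qed.
Lemma infinite_sum_le a b la lb : (forall n, a n <= b n) ->
  infinite_sum a la -> infinite_sum b lb -> la <= lb.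
Proof.
  intros H Ha Hb. apply Rle_cv_lim with (Un := sum_f_R0 a) (Vn := sum_f_R0 b); auto.
  intros n; induction n; simpl; auto. apply Rplus_le_compat; auto.
Qed.
Lemma infinite_sum_shift a l : infinite_sum (fun n => a (S n)) l -> infinite_sum a (a 0%nat + l).
Proof.
  intros H e He. destruct (H e He) as [N HN]. exists (S N). intros n Hn.
  destruct n; [lia|]. rewrite decomp_sum by lia. simpl pred. unfold R_dist.
  replace (a 0%nat + sum_f_R0 (fun i => a (S i)) n - (a 0%nat + l))
    with (sum_f_R0 (fun i => a (S i)) n - l) by ring.
  apply HN. lia.
Qed.

Lemma geometric_sum : infinite_sum (fun n => 1 / 2 ^ S n) 1.
Proof.
  assert (Partial : forall N, sum_f_R0 (fun n => 1 / 2 ^ S n) N = 1 - / 2 ^ S N).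
  { induction N; [simpl; field|]. rewrite tech5, IHN. simpl. pose proof (pow2_pos N). field. lra. }
  intros e He. destruct (pow2_small e 0 He) as (N & _ & HN). exists N. intros n Hn.
  unfold R_dist. rewrite Partial.
  replace (1 - / 2 ^ S n - 1) with (- / 2 ^ S n) by ring. rewrite Rabs_Ropp.
  pose proof (pow2_pos N); pose proof (pow2_pos (S n)).
  assert (2 ^ N <= 2 ^ S n) by (apply Rle_pow; [lra|lia]).
  assert (/ 2 ^ S n <= / 2 ^ N) by (apply Rinv_le_contravar; lra).
  rewrite Rabs_pos_eq by (left; apply Rinv_0_lt_compat; lra). lra.
Qed.

Section Soundness.
Variable f : Form -> R.
Hypothesis Hf : valuation f.
Let frange a : 0 <= f a <= 1. Proof. apply Hf. Qed.
Let fneg a : f (Neg a) = 1 - f a. Proof. apply Hf. Qed.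
Let fimp a b : f (Imp a b) = Rmin 1 (1 - f a + f b). Proof. apply Hf. Qed.
Let fdelta s : infinite_sum (fun n => f (s n) / 2 ^ (S n)) (f (Delta s)). Proof. apply Hf. Qed.

Lemma f_delta_eq s l : infinite_sum (fun n => f (s n) / 2 ^ (S n)) l -> f (Delta s) = l.
Proof. intros H. eapply uniqueness_sum; eauto. Qed.

Lemma f_imp_one a b : f a <= f b -> f (Imp a b) = 1.
Proof. intros. rewrite fimp. apply Rmin_left. pose proof (frange a); pose proof (frange b); lra. Qed.
Lemma f_imp_le a b : f (Imp a b) = 1 -> f a <= f b.
Proof. rewrite fimp. unfold Rmin. destruct Rle_dec; lra. Qed.
Lemma f_falsum a : f (Neg (Imp a a)) = 0.
Proof. rewrite fneg, fimp. unfold Rmin; destruct Rle_dec; lra. Qed.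

Lemma f_decomp s : f (Delta s) = f (s 0%nat) / 2 + f (Delta (stail s)) / 2.
Proof.
  apply f_delta_eq.
  pose proof (infinite_sum_shift (fun n => match n with
      | 0%nat => f (s 0%nat) / 2 ^ 1 | S n => / 2 * (f (stail s n) / 2 ^ S n) end) _
    (infinite_sum_scale _ _ (/ 2) (fdelta (stail s)))) as H.
  replace (f (s 0%nat) / 2 + f (Delta (stail s)) / 2)
    with (f (s 0%nat) / 2 ^ 1 + / 2 * f (Delta (stail s))) by (simpl; field).
  eapply infinite_sum_ext; [|exact H].
  intros [|n]; [reflexivity|]. unfold stail. simpl. field. apply pow_nonzero; lra.
Qed.

Lemma f_half a : f (half a) = f a / 2.
Proof.
  unfold half. rewrite f_decomp. simpl. change (stail _) with (sconst (Neg (Imp a a))).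
  assert (H : f (Delta (sconst (Neg (Imp a a)))) = 0).
  { apply f_delta_eq. replace 0 with (0 * 1) by ring.
    apply (infinite_sum_ext (fun n => 0 * (1 / 2 ^ S n))); [|apply infinite_sum_scale, geometric_sum].
    intros n. unfold sconst. rewrite f_falsum. field. apply pow_nonzero; lra. }
  rewrite H. lra.
Qed.

Lemma f_half_delta s : f (Delta (fun n => half (s n))) = f (Delta s) / 2.
Proof.
  apply f_delta_eq. replace (f (Delta s) / 2) with (/ 2 * f (Delta s)) by field.
  eapply infinite_sum_ext; [|exact (infinite_sum_scale _ _ (/ 2) (fdelta s))].
  intros n. simpl. rewrite f_half. field. apply pow_nonzero; lra.
Qed.

Lemma f_const a : f (Delta (sconst a)) = f a.
Proof.
  apply f_delta_eq. pose proof (infinite_sum_scale _ _ (f a) geometric_sum) as H.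
  rewrite Rmult_1_r in H. eapply infinite_sum_ext; [|exact H]. intros n. unfold sconst. field.
  apply pow_nonzero; lra.
Qed.

Lemma f_delta_mono s t : (forall n, f (s n) <= f (t n)) -> f (Delta s) <= f (Delta t).
Proof.
  intros H. eapply infinite_sum_le; [|apply (fdelta s)|apply (fdelta t)]. intros n. unfold Rdiv.
  apply Rmult_le_compat_r; auto. left; apply Rinv_0_lt_compat, pow2_pos.
Qed.

Lemma f_delta_imp s t : f (Delta (fun n => Imp (s n) (t n))) <= 1 - f (Delta s) + f (Delta t).
Proof.
  pose proof (infinite_sum_lin _ _ _ _ 1 1 geometric_sum
               (infinite_sum_lin _ _ _ _ (-1) 1 (fdelta s) (fdelta t))) as H.
  replace (1 - f (Delta s) + f (Delta t))
    with (1 * 1 + 1 * (-1 * f (Delta s) + 1 * f (Delta t))) by ring.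
  eapply infinite_sum_le; [|apply fdelta|exact H]. intros n. simpl. rewrite fimp.
  pose proof (Rmin_r 1 (1 - f (s n) + f (t n))). pose proof (pow2_pos n).
  unfold Rdiv. apply Rle_trans with ((1 - f (s n) + f (t n)) * / (2 * 2 ^ n)).
  - apply Rmult_le_compat_r; auto. left; apply Rinv_0_lt_compat; lra.
  - right; field; lra.
Qed.

Ltac solve_min := repeat rewrite ?fimp, ?fneg, ?f_half in *; unfold Rmin in *;
  repeat match goal with
  | |- context [Rle_dec ?a ?b] => destruct (Rle_dec a b)
  | H : context [Rle_dec ?a ?b] |- _ => destruct (Rle_dec a b)
  end; lra.

Lemma axiom_valid x : IsAxiom x -> f x = 1.
Proof.
  intros H; destruct H; apply f_imp_one.
  - pose proof (frange a); pose proof (frange b); solve_min.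
  - pose proof (frange a); pose proof (frange b); pose proof (frange c); solve_min.
  - pose proof (frange a); pose proof (frange b); solve_min.
  - pose proof (frange a); pose proof (frange b); solve_min.
  - rewrite ?fneg, ?fimp, ?f_half, (f_decomp s).
    pose proof (frange (s 0%nat)); pose proof (frange (Delta (stail s))). solve_min.
  - rewrite ?fneg, ?fimp, ?f_half, (f_decomp s). pose proof (frange (s 0%nat)); pose proof (frange (Delta (stail s))).
    solve_min.
  - rewrite f_half, f_half_delta. lra.
  - rewrite f_half, f_half_delta. lra.
  - rewrite f_const. lra.
  - rewrite f_const. lra.
  - rewrite f_half, (f_decomp (scons _ s)). change (stail (scons (Neg (Imp a a)) s)) with s.
    simpl. rewrite f_falsum. lra.
  - rewrite f_half, (f_decomp (scons _ s)). change (stail (scons (Neg (Imp a a)) s)) with s.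
    simpl. rewrite f_falsum. lra.
  - apply f_delta_mono. intros n. pose proof (frange (s n)); pose proof (frange (t n)). solve_min.
  - pose proof (frange a); pose proof (frange b). solve_min.
  - pose proof (frange a); pose proof (frange b). solve_min.
  - pose proof (f_delta_imp s t). pose proof (frange (Delta s)); pose proof (frange (Delta t)).
    pose proof (frange (Delta (fun n => Imp (s n) (t n)))). solve_min.
Qed.
End Soundness.

Lemma soundness Th phi : Provable Th phi -> Entails Th phi.
Proof.
  intros (I & lt & top & a & W & _ & _ & _ & _ & Htop & J) f Hf HTh.
  assert (All : forall i, f (a i) = 1).
  { intros i. induction i as [i IH] using (well_founded_ind W).
    destruct (J i) as [H|[H|[(j & k & Hj & Hk & E)|(g & Hg & E)]]].
    - apply axiom_valid; auto.
    - auto.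
    - pose proof (IH k Hk) as B. rewrite E in B. apply (f_imp_le f Hf) in B.
      rewrite (IH j Hj) in B. destruct Hf as [R _]. pose proof (R (a i)). lra.
    - rewrite E. apply (f_delta_eq f Hf). eapply infinite_sum_ext; [|exact geometric_sum].
      intros n. simpl. rewrite (IH (g n) (Hg n)). reflexivity. }
  rewrite <- Htop. apply All.
Qed.

(** A formula not derivable from [Th] has a valuation satisfying [Th] but
    not the formula: the value map of a linear extension of [Der Th] omitting
    [~phi -> 2^-n] for a suitable [n]. *)
Lemma countermodel Th phi : ~ Der Th phi ->
  exists f, valuation f /\ (forall t, Th t -> f t = 1) /\ f phi < 1.
Proof.
  intros nT.
  assert (Hn : exists n, ~ le (Der Th) (Neg phi) (half_pow n)).
  { apply NNPP. intros Hno. apply nT, archimedean. intros n.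
    apply NNPP. intros Hc. apply Hno. eauto. }
  destruct Hn as [n Hn].
  destruct (linear_extension (T := Der Th) (Imp (Neg phi) (half_pow n)) Hn) as (F & (HF & Ext & Fb) & lin).
  assert (consistent : ~ F Bot) by (intros HB; exact (Fb (le_filter _ _ (Bot_le _) HB))).
  assert (Hle : le F phi (Neg (half_pow n))).
  { destruct (lin (Neg phi) (half_pow n)) as [H|H]; [contradiction|].
    apply neg_anti in H. rewrite dneg in H. exact H. }
  exists (value (F:=F)). split; [apply value_valuation; auto|split].
  - intros t Ht. apply value_of_filter; auto. apply Ext, der_hyp, Ht.
  - eapply value_lt_1; eauto.
Qed.

Theorem mainTheorem13 :
  forall (Theta : Form -> Prop) (phi : Form), Provable Theta phi <-> Entails Theta phi.
Proof.
  intros Theta phi. split; [apply soundness|].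
  intros HE. apply Der_Provable. apply NNPP. intros nT.
  destruct (countermodel Theta phi nT) as (f & Hf & HTh & Hlt).
  pose proof (HE f Hf HTh). lra.
Qed.
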